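(* Let $U$ be a finite-dimensional real vector space and $\lambda\colon U_{\mathbb C}\to\mathbb C$ a polynomial function. For every entire function $\Psi\colon\mathbb C\to\mathbb C$ of finite order, there exists a holomorphic function $\nu$ on $U_{\mathbb C}$ with moderate vertical growth whose zero set is exactly $\lambda^{-1}(\{z\in\mathbb C:\Psi(z)=0\})$.
   Context: The order of an entire function $\Psi$ is the infimum of $e\ge0$ such that $|\Psi(z)|<C_e\exp(|z|^e)$ for all $z$ and some $C_e>0$. A holomorphic $\nu$ on $U_{\mathbb C}$ has moderate vertical growth if for every $M>0$ there is $r_M\in\mathbb R$ with $\sup_{\|\mathrm{Re}\,z\|<M}|\nu(z)|(1+\|z\|)^{r_M}<\infty$ for a Euclidean norm $\|\cdot\|$ on $U_{\mathbb C}$ (here $\mathrm{Re}\colon U_{\mathbb C}\to U$ is the real part). *)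

From Stdlib Require Import Reals.
From mathcomp Require Import ssreflect ssrfun ssrbool eqtype ssrnat fintype bigop.
Open Scope R_scope.


Record CC := mkC { Cre : R ; Cim : R }.

Definition C0 : CC := mkC 0 0.
Definition Cadd (z w : CC) : CC := mkC (Cre z + Cre w) (Cim z + Cim w).
Definition Copp (z : CC) : CC := mkC (- Cre z) (- Cim z).
Definition Csub (z w : CC) : CC := Cadd z (Copp w).
Definition Cmul (z w : CC) : CC :=
  mkC (Cre z * Cre w - Cim z * Cim w) (Cre z * Cim w + Cim z * Cre w).
Definition Cnorm (z : CC) : R := sqrt (Cre z * Cre z + Cim z * Cim z).

(* ---------- U = R^n, U_C = CC^n ---------- *)
Definition CVec (n : nat) := 'I_n -> CC.

Definition vadd {n} (z w : CVec n) : CVec n := fun i => Cadd (z i) (w i).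
Definition vnorm {n} (z : CVec n) : R :=
  sqrt (\big[Rplus/0]_(i < n) (Cnorm (z i) * Cnorm (z i))).
Definition renorm {n} (z : CVec n) : R :=
  sqrt (\big[Rplus/0]_(i < n) (Cre (z i) * Cre (z i))).

(* x^e for x >= 0 and real e >= 0, with the convention 0^0 = 1, 0^e = 0 (e>0) *)
Definition rpow (x e : R) : R :=
  if Req_EM_T x 0 then (if Req_EM_T e 0 then 1 else 0) else Rpower x e.

Definition entire (f : CC -> CC) : Prop :=
  forall z : CC, exists a : CC, forall eps : R, eps > 0 ->
    exists delta : R, delta > 0 /\
      forall h : CC, 0 < Cnorm h < delta ->
        Cnorm (Csub (Csub (f (Cadd z h)) (f z)) (Cmul a h)) <= eps * Cnorm h.

Definition holomorphic {n} (f : CVec n -> CC) : Prop :=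
  forall z : CVec n, exists a : CVec n, forall eps : R, eps > 0 ->
    exists delta : R, delta > 0 /\
      forall h : CVec n, 0 < vnorm h < delta ->
        Cnorm (Csub (Csub (f (vadd z h)) (f z))
                    (\big[Cadd/C0]_(i < n) Cmul (a i) (h i)))
          <= eps * vnorm h.

(* Psi has finite order: the set of e >= 0 with |Psi z| < C_e exp(|z|^e)
   for all z (some C_e > 0) is nonempty, i.e. its infimum is finite. *)
Definition finite_order (Psi : CC -> CC) : Prop :=
  exists e : R, e >= 0 /\ exists Ce : R, Ce > 0 /\
    forall z : CC, Cnorm (Psi z) < Ce * exp (rpow (Cnorm z) e).

Inductive poly_fun {n : nat} : (CVec n -> CC) -> Prop :=
  | pf_const (c : CC) : poly_fun (fun _ => c)
  | pf_coord (i : 'I_n) : poly_fun (fun z => z i)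
  | pf_add (p q : CVec n -> CC) :
      poly_fun p -> poly_fun q -> poly_fun (fun z => Cadd (p z) (q z))
  | pf_mul (p q : CVec n -> CC) :
      poly_fun p -> poly_fun q -> poly_fun (fun z => Cmul (p z) (q z)).

Definition moderate_vertical_growth {n} (nu : CVec n -> CC) : Prop :=
  forall M : R, M > 0 -> exists rM : R, exists B : R,
    forall z : CVec n, renorm z < M ->
      Cnorm (nu z) * Rpower (1 + vnorm z) rM <= B.

(* Take [nu = (Psi o lambda) * exp (- K q ^ D)] with [q z = - sum_i z_i ^ 2];
   the second factor is entire and never vanishes, so [nu] has the zeros of
   [Psi o lambda].  Finite order gives [|Psi (lambda z)| <= B exp (A (1 + |z|) ^ D)].
   Now [Re q = |Im z|^2 - |Re z|^2] and [|Im q| <= c |Re z|^2 + |Im z|^2 / c] for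
   every [c > 0], so on a vertical strip [q z] enters, for large [|Im z|], a cone
   around the positive real axis narrow enough that [Re (q ^ D)] is at least
   [|Im z|^(2D) / 2^(D+1)] up to a constant.  Since [(1 + |z|) ^ D] is at most
   [2^D |Im z|^(2D)] up to a constant on the strip, [K = A 2^(2D+1)] makes [nu]
   bounded there. *)

From HB Require Import structures.
From mathcomp Require Import ssreflect ssrfun ssrbool eqtype ssrnat fintype bigop.
From Stdlib Require Import ZArith Reals Lra Psatz.
Open Scope R_scope.

Lemma CC_ext (z w : CC) : Cre z = Cre w -> Cim z = Cim w -> z = w.
Proof. by case: z => a b; case: w => c d /= -> ->. Qed.

Ltac Ceq := apply: CC_ext => /=; ring.

Definition C1 : CC := mkC 1 0.

Lemma CaddA : associative Cadd. Proof. by move=> x y z; Ceq. Qed.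
Lemma CaddC : commutative Cadd. Proof. by move=> x y; Ceq. Qed.
Lemma Cadd0l : left_id C0 Cadd. Proof. by move=> x; Ceq. Qed.
HB.instance Definition _ := Monoid.isComLaw.Build CC C0 Cadd CaddA CaddC Cadd0l.

Lemma RplusA : associative Rplus. Proof. by move=> x y z; ring. Qed.
Lemma RplusC : commutative Rplus. Proof. by move=> x y; ring. Qed.
Lemma Rplus0l : left_id 0 Rplus. Proof. by move=> x; ring. Qed.
HB.instance Definition _ := Monoid.isComLaw.Build R 0 Rplus RplusA RplusC Rplus0l.

Lemma Cnorm_ge0 z : 0 <= Cnorm z. Proof. exact: sqrt_pos. Qed.

Lemma Cnorm_sq z : Cnorm z * Cnorm z = Cre z * Cre z + Cim z * Cim z.
Proof. by rewrite /Cnorm sqrt_sqrt //; nra. Qed.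

Lemma Cnorm_mul z w : Cnorm (Cmul z w) = Cnorm z * Cnorm w.
Proof. rewrite /Cnorm -sqrt_mult; try nra; f_equal => /=; ring. Qed.

Lemma sqrt_le_of_sq x y : 0 <= x -> y <= x * x -> sqrt y <= x.
Proof. by move=> hx h; rewrite -(sqrt_square x) //; apply: sqrt_le_1_alt. Qed.

Lemma sqrt_ge_of_sq x y : x * x <= y -> x <= sqrt y.
Proof.
move=> h; case: (Rle_lt_dec x 0) => hx; first by have := sqrt_pos y; lra.
by rewrite -(sqrt_square x); [apply: sqrt_le_1_alt | lra].
Qed.

Lemma Cnorm_add z w : Cnorm (Cadd z w) <= Cnorm z + Cnorm w.
Proof.
apply: sqrt_le_of_sq; first by have := Cnorm_ge0 z; have := Cnorm_ge0 w; lra.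
have := Cnorm_sq z; have := Cnorm_sq w.
have := Cnorm_ge0 z; have := Cnorm_ge0 w; case: z => a b; case: w => c d /=.
set r := Cnorm _; set s := Cnorm _ => hr hs er es.
have cauchy_schwarz : a * c + b * d <= s * r.
  apply: Rsqr_incr_0_var; last by nra.
  by have := Rle_0_sqr (a * d - b * c); rewrite /Rsqr; nra.
nra.
Qed.

Lemma Cnorm0 : Cnorm C0 = 0.
Proof. by rewrite /Cnorm /= Rmult_0_l Rplus_0_l sqrt_0. Qed.

Lemma Cnorm1 : Cnorm C1 = 1.
Proof. by rewrite /Cnorm /= Rmult_0_l Rplus_0_r Rmult_1_l sqrt_1. Qed.

Lemma Cnorm_eq0 z : Cnorm z = 0 -> z = C0.
Proof. by move=> h; have := Cnorm_sq z; rewrite h => e; apply: CC_ext => /=; nra. Qed.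

Lemma Cre_le z : Rabs (Cre z) <= Cnorm z.
Proof. by rewrite -sqrt_Rsqr_abs; apply: sqrt_le_1_alt; rewrite /Rsqr; nra. Qed.

Lemma Cim_le z : Rabs (Cim z) <= Cnorm z.
Proof. by rewrite -sqrt_Rsqr_abs; apply: sqrt_le_1_alt; rewrite /Rsqr; nra. Qed.

Lemma Cnorm_le_reim z : Cnorm z <= Rabs (Cre z) + Rabs (Cim z).
Proof.
apply: sqrt_le_of_sq; first by have := Rabs_pos (Cre z); have := Rabs_pos (Cim z); lra.
have := Rabs_pos (Cre z); have := Rabs_pos (Cim z).
by have := Rsqr_abs (Cre z); have := Rsqr_abs (Cim z); rewrite /Rsqr; nra.
Qed.

Section Sums.
Variable n : nat.
Implicit Types (F G : 'I_n -> R).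

Lemma sumR_le F G : (forall i, F i <= G i) ->
  \big[Rplus/0]_(i < n) F i <= \big[Rplus/0]_(i < n) G i.
Proof. by move=> h; apply: (big_ind2 Rle) => [|*|i _]; [lra | lra | exact: h]. Qed.

Lemma sumR_ge0 F : (forall i, 0 <= F i) -> 0 <= \big[Rplus/0]_(i < n) F i.
Proof. by move=> h; apply: (big_ind (Rle 0)) => [|*|i _]; [lra | lra | exact: h]. Qed.

Lemma sumR_abs F : Rabs (\big[Rplus/0]_(i < n) F i) <= \big[Rplus/0]_(i < n) Rabs (F i).
Proof.
apply: (big_ind2 (fun x y => Rabs x <= y)) => [|x1 x2 y1 y2 h1 h2|i _].
- by rewrite Rabs_R0; lra.
- by have := Rabs_triang x1 y1; lra.
- by lra.
Qed.

Lemma sumR_scal c F : \big[Rplus/0]_(i < n) (c * F i) = c * \big[Rplus/0]_(i < n) F i.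
Proof. by apply: (big_rec2 (fun x y => x = c * y)) => [|i x y _ ->]; ring. Qed.

Lemma Cnorm_sum (H : 'I_n -> CC) :
  Cnorm (\big[Cadd/C0]_(i < n) H i) <= \big[Rplus/0]_(i < n) Cnorm (H i).
Proof.
apply: (big_ind2 (fun x y => Cnorm x <= y)) => [|x1 x2 y1 y2 h1 h2|i _].
- by rewrite Cnorm0; lra.
- by have := Cnorm_add x1 y1; lra.
- by lra.
Qed.

Lemma Cre_sum (H : 'I_n -> CC) :
  Cre (\big[Cadd/C0]_(i < n) H i) = \big[Rplus/0]_(i < n) Cre (H i).
Proof. exact: big_morph. Qed.

Lemma Cim_sum (H : 'I_n -> CC) :
  Cim (\big[Cadd/C0]_(i < n) H i) = \big[Rplus/0]_(i < n) Cim (H i).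
Proof. exact: big_morph. Qed.

Lemma Cmul_sumr p (H : 'I_n -> CC) :
  Cmul p (\big[Cadd/C0]_(i < n) H i) = \big[Cadd/C0]_(i < n) Cmul p (H i).
Proof. by apply: big_morph => [x y|]; Ceq. Qed.

End Sums.

Lemma Rmult_div_succ_le c x : 0 <= c -> 0 <= x -> c * (x / (c + 1)) <= x.
Proof.
move=> hc hx; have -> : c * (x / (c + 1)) = x - x / (c + 1) by field; lra.
suff : 0 <= x / (c + 1) by lra.
by apply: Rmult_le_pos; [lra | apply: Rlt_le; apply: Rinv_0_lt_compat; lra].
Qed.

Section Holomorphy.
Context {n : nat}.
Implicit Types (f : CVec n -> CC) (a h z : CVec n) (r : CVec n -> CC).

Lemma vnorm_ge0 h : 0 <= vnorm h. Proof. exact: sqrt_pos. Qed.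

Lemma Cnorm_coord_le h i : Cnorm (h i) <= vnorm h.
Proof.
apply: sqrt_ge_of_sq; rewrite (bigD1 i) //=.
rewrite -[X in X <= _]Rplus_0_r; apply: Rplus_le_compat_l.
rewrite big_mkcond; apply: sumR_ge0 => j; case: ifP => _; last lra.
by have := Cnorm_ge0 (h j); nra.
Qed.

Definition lin a h : CC := \big[Cadd/C0]_(i < n) Cmul (a i) (h i).

Lemma lin_bound a h : Cnorm (lin a h) <= (\big[Rplus/0]_(i < n) Cnorm (a i)) * vnorm h.
Proof.
apply: Rle_trans (Cnorm_sum _ _) _; rewrite Rmult_comm -sumR_scal.
apply: sumR_le => i; rewrite Cnorm_mul Rmult_comm.
by apply: Rmult_le_compat_r; [exact: Cnorm_ge0 | exact: Cnorm_coord_le].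
Qed.

Lemma lin_comb p q a b h :
  lin (fun i => Cadd (Cmul p (a i)) (Cmul q (b i))) h =
  Cadd (Cmul p (lin a h)) (Cmul q (lin b h)).
Proof. by rewrite /lin !Cmul_sumr -big_split /=; apply: eq_bigr => i _; Ceq. Qed.

Lemma lin_scal p a h : lin (fun i => Cmul p (a i)) h = Cmul p (lin a h).
Proof. by rewrite /lin Cmul_sumr; apply: eq_bigr => i _; Ceq. Qed.

Definition littleo r := forall eps, eps > 0 -> exists delta, delta > 0 /\
  forall h, 0 < vnorm h < delta -> Cnorm (r h) <= eps * vnorm h.
Definition bigO r := exists C delta, 0 <= C /\ delta > 0 /\
  forall h, 0 < vnorm h < delta -> Cnorm (r h) <= C * vnorm h.
Definition vanishing r := forall eps, eps > 0 -> exists delta, delta > 0 /\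
  forall h, 0 < vnorm h < delta -> Cnorm (r h) <= eps.

Definition increment f z h := Csub (f (vadd z h)) (f z).
Definition remainder f z a h := Csub (increment f z h) (lin a h).

Lemma holomorphicP f : holomorphic f <-> forall z, exists a, littleo (remainder f z a).
Proof. by []. Qed.

Lemma littleo_ext {r1 r2} : (forall h, r1 h = r2 h) -> littleo r1 -> littleo r2.
Proof. by move=> e H eps /H [d [hd Hd]]; exists d; split => // h; rewrite -e; exact: Hd. Qed.

Lemma bigO_ext {r1 r2} : (forall h, r1 h = r2 h) -> bigO r1 -> bigO r2.
Proof. by move=> e [C [d [hC [hd Hd]]]]; exists C, d; split => //; split => // h; rewrite -e; exact: Hd. Qed.

Lemma littleo0 : littleo (fun _ => C0).
Proof. by move=> eps he; exists 1; split => [|h _]; [lra | rewrite Cnorm0; have := vnorm_ge0 h; nra]. Qed.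

Lemma littleoD {r1 r2} : littleo r1 -> littleo r2 -> littleo (fun h => Cadd (r1 h) (r2 h)).
Proof.
move=> H1 H2 eps he.
have [d1 [hd1 Hd1]] := H1 (eps / 2) ltac:(lra).
have [d2 [hd2 Hd2]] := H2 (eps / 2) ltac:(lra).
exists (Rmin d1 d2); split => [|h hh]; first exact: Rmin_pos.
have := Rmin_l d1 d2; have := Rmin_r d1 d2 => m2 m1.
apply: Rle_trans (Cnorm_add _ _) _.
by have := Hd1 h ltac:(lra); have := Hd2 h ltac:(lra); lra.
Qed.

Lemma littleoZ p {r} : littleo r -> littleo (fun h => Cmul p (r h)).
Proof.
move=> H eps he; have hp := Cnorm_ge0 p.
have [d [hd Hd]] := H (eps / (Cnorm p + 1)) ltac:(apply: Rdiv_lt_0_compat; lra).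
exists d; split => // h hh; rewrite Cnorm_mul.
apply: Rle_trans (Rmult_le_compat_l _ _ _ hp (Hd h hh)) _.
have := Rmult_div_succ_le _ _ hp (Rlt_le _ _ he); have := vnorm_ge0 h; nra.
Qed.

Lemma littleo_bigO {r} : littleo r -> bigO r.
Proof. move=> /(_ 1 Rlt_0_1) [d [hd Hd]]; by exists 1, d; split; [lra | split]. Qed.

Lemma bigO_lin a : bigO (lin a).
Proof.
exists (\big[Rplus/0]_(i < n) Cnorm (a i)), 1; split; last split => [|h _].
- by apply: sumR_ge0 => i; exact: Cnorm_ge0.
- by lra.
- exact: lin_bound.
Qed.

Lemma bigOD {r1 r2} : bigO r1 -> bigO r2 -> bigO (fun h => Cadd (r1 h) (r2 h)).
Proof.
move=> [C1 [d1 [hC1 [hd1 Hd1]]]] [C2 [d2 [hC2 [hd2 Hd2]]]].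
exists (C1 + C2), (Rmin d1 d2); split; [lra | split => [|h hh]]; first exact: Rmin_pos.
have := Rmin_l d1 d2; have := Rmin_r d1 d2 => m2 m1.
apply: Rle_trans (Cnorm_add _ _) _.
by have := Hd1 h ltac:(lra); have := Hd2 h ltac:(lra); lra.
Qed.

Lemma bigO_vanishing {r} : bigO r -> vanishing r.
Proof.
move=> [C [d [hC [hd Hd]]]] eps he.
have he' : 0 < eps / (C + 1) by apply: Rdiv_lt_0_compat; lra.
exists (Rmin d (eps / (C + 1))); split => [|h hh]; first exact: Rmin_pos.
have := Rmin_l d (eps / (C + 1)); have := Rmin_r d (eps / (C + 1)) => m2 m1.
apply: Rle_trans (Hd h ltac:(lra)) _.
by have := Rmult_div_succ_le _ _ hC (Rlt_le _ _ he); have := vnorm_ge0 h; nra.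
Qed.

Lemma littleoM {r1 r2} : bigO r1 -> vanishing r2 -> littleo (fun h => Cmul (r1 h) (r2 h)).
Proof.
move=> [C [d [hC [hd Hd]]]] H2 eps he.
have [d2 [hd2 Hd2]] := H2 (eps / (C + 1)) ltac:(apply: Rdiv_lt_0_compat; lra).
exists (Rmin d d2); split => [|h hh]; first exact: Rmin_pos.
have := Rmin_l d d2; have := Rmin_r d d2 => m2 m1.
rewrite Cnorm_mul.
apply: Rle_trans (Rmult_le_compat _ _ _ _ (Cnorm_ge0 _) (Cnorm_ge0 _)
                    (Hd h ltac:(lra)) (Hd2 h ltac:(lra))) _.
by have := Rmult_div_succ_le _ _ hC (Rlt_le _ _ he); have := vnorm_ge0 h; nra.
Qed.

Lemma increment_bigO {f z a} : littleo (remainder f z a) -> bigO (increment f z).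
Proof.
move=> H; apply: bigO_ext (bigOD (bigO_lin a) (littleo_bigO H)) => h.
by rewrite /remainder; Ceq.
Qed.

Lemma holomorphic_ext {f g} : (forall z, f z = g z) -> holomorphic f -> holomorphic g.
Proof.
move=> e /holomorphicP H; apply/holomorphicP => z; have [a Ha] := H z.
by exists a; apply: littleo_ext Ha => h; rewrite /remainder /increment !e.
Qed.

Lemma holomorphic_cst c : holomorphic (fun _ : CVec n => c).
Proof.
apply/holomorphicP => z; exists (fun _ => C0); apply: littleo_ext littleo0 => h.
by rewrite /remainder /increment /lin big1 => [|i _]; Ceq.
Qed.

Lemma holomorphic_coord i : holomorphic (fun z : CVec n => z i).
Proof.
apply/holomorphicP => z; exists (fun j => if j == i then C1 else C0).
apply: littleo_ext littleo0 => h.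
rewrite /remainder /increment /lin (bigD1 i) //= eqxx big1 => [|j /negbTE ->]; Ceq.
Qed.

Lemma holomorphicD {f g} : holomorphic f -> holomorphic g ->
  holomorphic (fun z => Cadd (f z) (g z)).
Proof.
move=> /holomorphicP Hf /holomorphicP Hg; apply/holomorphicP => z.
have [af Haf] := Hf z; have [ag Hag] := Hg z.
exists (fun i => Cadd (Cmul C1 (af i)) (Cmul C1 (ag i))).
apply: littleo_ext (littleoD Haf Hag) => h.
by rewrite /remainder /increment lin_comb; Ceq.
Qed.

Lemma holomorphicM {f g} : holomorphic f -> holomorphic g ->
  holomorphic (fun z => Cmul (f z) (g z)).
Proof.
move=> /holomorphicP Hf /holomorphicP Hg; apply/holomorphicP => z.
have [af Haf] := Hf z; have [ag Hag] := Hg z.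
exists (fun i => Cadd (Cmul (f z) (ag i)) (Cmul (g z) (af i))).
have Hfg := littleoM (increment_bigO Haf) (bigO_vanishing (increment_bigO Hag)).
apply: littleo_ext (littleoD (littleoD (littleoZ (f z) Hag) (littleoZ (g z) Haf)) Hfg) => h.
by rewrite /remainder /increment lin_comb; Ceq.
Qed.

Lemma littleo_comp {rg : CC -> CC} {r} : rg C0 = C0 ->
  (forall eps, eps > 0 -> exists delta, delta > 0 /\
     forall k, 0 < Cnorm k < delta -> Cnorm (rg k) <= eps * Cnorm k) ->
  bigO r -> littleo (fun h => rg (r h)).
Proof.
move=> rg0 Hrg Hr eps he.
have [C [d1 [hC [hd1 Hd1]]]] := Hr.
have he' : 0 < eps / (C + 1) by apply: Rdiv_lt_0_compat; lra.
have [dg [hdg Hdg]] := Hrg _ he'.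
have [d2 [hd2 Hd2]] := bigO_vanishing Hr (dg / 2) ltac:(lra).
exists (Rmin d1 d2); split => [|h hh]; first exact: Rmin_pos.
have := Rmin_l d1 d2; have := Rmin_r d1 d2 => m2 m1.
have H1 := Hd1 h ltac:(lra); have H2 := Hd2 h ltac:(lra).
have hv := vnorm_ge0 h; have hr := Cnorm_ge0 (r h).
have [r0 | rn0] := Req_dec (Cnorm (r h)) 0.
  by rewrite (Cnorm_eq0 _ r0) rg0 Cnorm0; nra.
apply: Rle_trans (Hdg (r h) ltac:(lra)) _.
by have := Rmult_div_succ_le _ _ hC (Rlt_le _ _ he); nra.
Qed.

Lemma holomorphic_comp {g : CC -> CC} {f} : entire g -> holomorphic f ->
  holomorphic (fun z => g (f z)).
Proof.
move=> Hg /holomorphicP Hf; apply/holomorphicP => z.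
have [af Haf] := Hf z; have [b Hb] := Hg (f z).
exists (fun i => Cmul b (af i)).
pose rg k := Csub (Csub (g (Cadd (f z) k)) (g (f z))) (Cmul b k).
have rg0 : rg C0 = C0 by rewrite /rg (_ : Cadd (f z) C0 = f z); [Ceq | Ceq].
apply: littleo_ext (littleoD (littleo_comp rg0 Hb (increment_bigO Haf)) (littleoZ b Haf)) => h.
rewrite /remainder /increment lin_scal /rg.
by rewrite (_ : Cadd (f z) (Csub (f (vadd z h)) (f z)) = f (vadd z h)); Ceq.
Qed.

End Holomorphy.

Lemma holomorphic_sum {n} {I : Type} (r : list I) (F : I -> CVec n -> CC) :
  (forall i, holomorphic (F i)) -> holomorphic (fun z => \big[Cadd/C0]_(i <- r) F i z).
Proof.
move=> HF; elim: r => [|i r IH].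
  by apply: (holomorphic_ext _ (holomorphic_cst C0)) => z; rewrite big_nil.
by apply: (holomorphic_ext _ (holomorphicD (HF i) IH)) => z; rewrite big_cons.
Qed.

Lemma poly_fun_holomorphic {n} {f : CVec n -> CC} : poly_fun f -> holomorphic f.
Proof.
elim=> [c|i|p q _ Hp _ Hq|p q _ Hp _ Hq].
- exact: holomorphic_cst.
- exact: holomorphic_coord.
- exact: holomorphicD.
- exact: holomorphicM.
Qed.

Lemma poly_fun_bound {n} {f : CVec n -> CC} : poly_fun f ->
  exists A d, 0 < A /\ forall z, Cnorm (f z) <= A * (1 + vnorm z) ^ d.
Proof.
have pow_mono (z : CVec n) d e : (d <= e)%coq_nat -> (1 + vnorm z) ^ d <= (1 + vnorm z) ^ e.
  by apply: Rle_pow; have := vnorm_ge0 z; lra.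
elim=> [c|i|p q _ [A1 [d1 [h1 H1]]] _ [A2 [d2 [h2 H2]]]|p q _ [A1 [d1 [h1 H1]]] _ [A2 [d2 [h2 H2]]]].
- by exists (Cnorm c + 1), 0%nat; have := Cnorm_ge0 c; split => [|z /=]; lra.
- exists 1, 1%nat; split => [|z /=]; first lra.
  by have := Cnorm_coord_le z i; lra.
- exists (A1 + A2), (d1 + d2)%nat; split => [|z]; first lra.
  have := pow_mono z d1 (d1 + d2)%nat (Nat.le_add_r _ _).
  have := pow_mono z d2 (d1 + d2)%nat (Nat.le_add_l _ _).
  by have := H1 z; have := H2 z; have := Cnorm_add (p z) (q z); nra.
- exists (A1 * A2), (d1 + d2)%nat; split => [|z]; first nra.
  rewrite Cnorm_mul pow_add.
  have := Rmult_le_compat _ _ _ _ (Cnorm_ge0 (p z)) (Cnorm_ge0 (q z)) (H1 z) (H2 z).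
  by lra.
Qed.

Fixpoint Cpow (w : CC) (k : nat) : CC :=
  if k is k'.+1 then Cmul w (Cpow w k') else C1.

Lemma holomorphic_pow {n} {f : CVec n -> CC} k :
  holomorphic f -> holomorphic (fun z => Cpow (f z) k).
Proof.
move=> H; elim: k => [|k IH]; first exact: holomorphic_cst.
exact: holomorphicM.
Qed.

Lemma Cnorm_pow w k : Cnorm (Cpow w k) = Cnorm w ^ k.
Proof. by elim: k => [|k IH] /=; [exact: Cnorm1 | rewrite Cnorm_mul IH]. Qed.

Lemma CpowM a b k : Cpow (Cmul a b) k = Cmul (Cpow a k) (Cpow b k).
Proof. by elim: k => [|k IH] /=; [Ceq | rewrite IH; Ceq]. Qed.

Lemma Cpow_real u k : Cpow (mkC u 0) k = mkC (u ^ k) 0.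
Proof. by elim: k => [|k IH] //=; rewrite IH; Ceq. Qed.

Lemma Cnorm_Cpow_sub a b k :
  Cnorm (Csub (Cpow (Cadd a b) k) (Cpow a k)) <= (Cnorm a + Cnorm b) ^ k - Cnorm a ^ k.
Proof.
elim: k => [|k IH].
  by rewrite /= (_ : Csub C1 C1 = C0) ?Cnorm0; [lra | Ceq].
rewrite (_ : Csub (Cpow (Cadd a b) k.+1) (Cpow a k.+1) =
  Cadd (Cmul (Cadd a b) (Csub (Cpow (Cadd a b) k) (Cpow a k))) (Cmul b (Cpow a k))); last first.
  by rewrite /=; Ceq.
apply: Rle_trans (Cnorm_add _ _) _; rewrite !Cnorm_mul Cnorm_pow /=.
have := Rmult_le_compat _ _ _ _ (Cnorm_ge0 _) (Cnorm_ge0 _) (Cnorm_add a b) IH.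
by have := pow_le (Cnorm a) k (Cnorm_ge0 a); have := Cnorm_ge0 b; nra.
Qed.

Definition Cexp (w : CC) : CC :=
  mkC (exp (Cre w) * cos (Cim w)) (exp (Cre w) * sin (Cim w)).

Lemma CexpD w k : Cexp (Cadd w k) = Cmul (Cexp w) (Cexp k).
Proof. by apply: CC_ext; rewrite /= exp_plus ?cos_plus ?sin_plus; ring. Qed.

Lemma Cnorm_Cexp w : Cnorm (Cexp w) = exp (Cre w).
Proof.
rewrite /Cnorm /= -[X in _ = X]sqrt_square; last exact: Rlt_le (exp_pos _).
by f_equal; have := sin2_cos2 (Cim w); rewrite /Rsqr; nra.
Qed.

Lemma Cnorm_real u : Cnorm (mkC u 0) = Rabs u.
Proof. by rewrite /Cnorm /= -sqrt_Rsqr_abs /Rsqr; f_equal; ring. Qed.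

Lemma Cnorm_imag v : Cnorm (mkC 0 v) = Rabs v.
Proof. by rewrite /Cnorm /= -sqrt_Rsqr_abs /Rsqr; f_equal; ring. Qed.

Lemma Rabs_le_half x : Rabs x <= 1/2 -> -1/2 <= x <= 1/2.
Proof. by move=> h; have := Rle_abs x; have := Rle_abs (- x); rewrite Rabs_Ropp; lra. Qed.

Lemma exp_taylor1 a : Rabs a <= 1/2 -> Rabs (exp a - 1 - a) <= 2 * (a * a).
Proof.
move=> /Rabs_le_half ha.
have lo := exp_ineq1_le a; have lo' := exp_ineq1_le (- a).
have inv : exp a * exp (- a) = 1 by rewrite -exp_plus Rplus_opp_r exp_0.
have := exp_pos a; have := exp_pos (- a) => p' p.
(* [exp a <= 1 / (1 - a)] comes from [1 - a <= exp (- a)]. *)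
have up : exp a * (1 - a) <= 1 by nra.
by rewrite Rabs_right; nra.
Qed.

Lemma sin_taylor1 b : Rabs b <= 1/2 -> Rabs (sin b - b) <= b * b.
Proof.
have key c : 0 <= c <= 1/2 -> 0 <= c - sin c <= c * c.
  move=> hc; have [lo _] := pre_sin_bound c 0 ltac:(lra) ltac:(lra).
  move: lo; rewrite /sin_approx /sin_term /= => lo.
  have [->|c0] := Req_dec c 0; first by rewrite sin_0; lra.
  by have := sin_lt_x c ltac:(lra); nra.
move=> /Rabs_le_half hb; have [b0|b0] := Rle_lt_dec 0 b.
  by have := key b ltac:(lra) => k; rewrite Rabs_left1; lra.
by have := key (- b) ltac:(lra); rewrite sin_neg => k; rewrite Rabs_right; nra.
Qed.

Lemma cos_taylor1 b : Rabs b <= 1/2 -> Rabs (cos b - 1) <= b * b.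
Proof.
move=> /Rabs_le_half hb; have [lo _] := pre_cos_bound b 0 ltac:(lra) ltac:(lra).
move: lo; rewrite /cos_approx /cos_term /= => lo.
by have := COS_bound b => k; rewrite Rabs_left1; nra.
Qed.

Lemma Cexp_taylor1 k : Cnorm k <= 1/2 ->
  Cnorm (Csub (Csub (Cexp k) C1) k) <= 4 * (Cnorm k * Cnorm k).
Proof.
have := Cnorm_sq k; have := Cre_le k; have := Cim_le k.
case: k => a b /= hb ha sq hk.
set E := mkC (cos b - 1) (sin b - b).
have -> : Csub (Csub (Cexp (mkC a b)) C1) (mkC a b) =
    Cadd (Cadd (Cmul (mkC (1 + a) 0) E) (mkC 0 (a * b)))
         (Cmul (mkC (exp a - 1 - a) 0) (Cexp (mkC 0 b))).
  by rewrite /E /Cexp /= exp_0; Ceq.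
apply: Rle_trans (Cnorm_add _ _) _; apply: Rle_trans (Rplus_le_compat_r _ _ _ (Cnorm_add _ _)) _.
rewrite !Cnorm_mul Cnorm_Cexp Cnorm_imag !Cnorm_real /= exp_0 Rmult_1_r Rabs_mult.
have hE : Cnorm E <= 2 * (b * b).
  apply: Rle_trans (Cnorm_le_reim E) _.
  by have := cos_taylor1 b ltac:(lra); have := sin_taylor1 b ltac:(lra); rewrite /E /=; lra.
have := exp_taylor1 a ltac:(lra).
have := Rabs_pos a; have := Rabs_pos b; have := Cnorm_ge0 E.
have e1 := Rsqr_abs a; have e2 := Rsqr_abs b; rewrite /Rsqr in e1 e2.
have ha' := Rabs_le_half a ltac:(lra).
by rewrite (Rabs_right (1 + a)); [nra | lra].
Qed.

Lemma Cexp_entire : entire Cexp.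
Proof.
move=> w; exists (Cexp w) => eps he.
set E := Cnorm (Cexp w); have hE : 0 <= E := Cnorm_ge0 _.
set t := eps / (4 * E + 1).
have ht : 0 < t by apply: Rdiv_lt_0_compat; lra.
have et : eps = (4 * E + 1) * t by rewrite /t; field; lra.
exists (Rmin (1/2) t); split => [|k [hk0 hk]]; first by apply: Rmin_pos; lra.
have := Rmin_l (1/2) t; have := Rmin_r (1/2) t => m2 m1.
rewrite (_ : Csub (Csub (Cexp (Cadd w k)) (Cexp w)) (Cmul (Cexp w) k) =
   Cmul (Cexp w) (Csub (Csub (Cexp k) C1) k)); last by rewrite CexpD; Ceq.
rewrite Cnorm_mul -/E.
apply: Rle_trans (Rmult_le_compat_l _ _ _ hE (Cexp_taylor1 k ltac:(lra))) _.
have hk' : Cnorm k * Cnorm k <= t * Cnorm k by have := Cnorm_ge0 k; nra.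
by rewrite et; have := Cnorm_ge0 k; nra.
Qed.

Lemma exp_le_mono x y : x <= y -> exp x <= exp y.
Proof. by case/Rle_lt_or_eq_dec => [/exp_increasing|->]; lra. Qed.

Lemma rpow_le_1_plus_pow e : 0 <= e -> exists m : nat, forall t, 0 <= t -> rpow t e <= 1 + t ^ m.
Proof.
move=> he; have [up_gt _] := archimed e.
have up_ge0 : (0 <= up e)%Z by apply: Z.lt_le_incl; apply: lt_IZR; lra.
exists (Z.to_nat (up e)) => t ht; set m := Z.to_nat (up e).
have hm : e <= INR m by rewrite /m INR_IZR_INZ Z2Nat.id //; lra.
have tm := pow_le t m ht.
rewrite /rpow; case: Req_EM_T => [t0|t0] /=; first by case: Req_dec_T => /=; lra.
have [t1|t1] := Rle_lt_dec t 1.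
  have := Rle_Rpower_l t 1 e he ltac:(lra).
  by rewrite /Rpower [ln 1]ln_1 Rmult_0_r exp_0; lra.
by have := Rle_Rpower t e _ ltac:(lra) hm; rewrite Rpower_pow; lra.
Qed.

Lemma finite_order_poly_growth {n} {Psi : CC -> CC} {lambda : CVec n -> CC} :
  finite_order Psi -> poly_fun lambda ->
  exists B A D, 0 <= B /\ 0 <= A /\
    forall z, Cnorm (Psi (lambda z)) <= B * exp (A * (1 + vnorm z) ^ D).
Proof.
move=> [e [he [Ce [hCe HPsi]]]] /poly_fun_bound [A [d [hA Hlambda]]].
have [m Hm] := rpow_le_1_plus_pow e (Rge_le _ _ he).
exists (Ce * exp 1), (A ^ m), (d * m)%nat; split; last split.
- by have := exp_pos 1; nra.
- by apply: pow_le; lra.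
move=> z; have hl := Cnorm_ge0 (lambda z).
have hlm : Cnorm (lambda z) ^ m <= A ^ m * (1 + vnorm z) ^ (d * m).
  by rewrite pow_mult -Rpow_mult_distr; apply: pow_incr; split.
apply: Rlt_le; apply: Rlt_le_trans (HPsi _) _.
rewrite Rmult_assoc -exp_plus; apply: Rmult_le_compat_l; first lra.
by apply: exp_le_mono; have := Hm _ hl; lra.
Qed.

Lemma pow_1plus_le_exp s N : 0 <= s -> (1 + s) ^ N <= exp (INR N * s).
Proof.
move=> hs; elim: N => [|N IH]; first by rewrite /= Rmult_0_l exp_0; lra.
rewrite S_INR Rmult_plus_distr_r Rmult_1_l exp_plus /=.
by have := exp_ineq1_le s; have := pow_le (1 + s) N ltac:(lra); nra.
Qed.

Lemma exp_quarter_le : exp (1/4) <= 4/3.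
Proof.
have := exp_ineq1_le (- (1/4)); have := exp_pos (1/4).
have : exp (1/4) * exp (- (1/4)) = 1 by rewrite -exp_plus Rplus_opp_r exp_0.
by nra.
Qed.

(* Writing [w = u (1 + i t)] with [N |t| <= 1/4], the factor [(1 + i t) ^ N]
   stays within [1/2] of [1]. *)
Lemma Re_Cpow_ge_half w N : 0 < Cre w -> 4 * INR N * Rabs (Cim w) <= Cre w ->
  Cre w ^ N / 2 <= Cre (Cpow w N).
Proof.
move=> hu hv; set u := Cre w; set t := Cim w / u.
set p := Cpow (Cadd C1 (mkC 0 t)) N.
have -> : Cpow w N = Cmul (mkC (u ^ N) 0) p.
  rewrite -Cpow_real -CpowM; congr Cpow; apply: CC_ext; rewrite /t /u /=; field; lra.
have ht : INR N * Rabs t <= 1/4.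
  have e : Rabs t * u = Rabs (Cim w).
    by rewrite /t /Rdiv Rabs_mult Rabs_inv (Rabs_right u) /u; [field | ]; lra.
  have := pos_INR N; have := Rabs_pos t; rewrite /u in e *; nra.
have hp : Rabs (Cre p - 1) <= 1/2.
  have := Cnorm_Cpow_sub C1 (mkC 0 t) N.
  rewrite Cnorm1 Cnorm_imag pow1 (_ : Cpow C1 N = C1); last first.
    by rewrite /C1 Cpow_real pow1.
  move=> /(Rle_trans _ _ _ (Cre_le _)) /=.
  have := pow_1plus_le_exp (Rabs t) N (Rabs_pos t).
  have := exp_le_mono _ _ ht; have := exp_quarter_le.
  by rewrite /p /Rminus; lra.
have := pow_lt u N hu; rewrite /= Rmult_0_l Rminus_0_r.
by have := Rabs_le_half _ hp; nra.
Qed.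

Lemma Re_Cpow_strip M N : 0 <= M -> exists C, 0 <= C /\
  forall w T X, 0 <= T -> 0 <= X <= M -> Cre w = T - X ->
    (forall c, 0 < c -> Rabs (Cim w) <= c * X + T / c) ->
    T ^ N <= 2 ^ N.+1 * Cre (Cpow w N) + C.
Proof.
move=> hM; have hN := pos_INR N.
pose c := 8 * INR N + 1; have hc : 1 <= c by rewrite /c; lra.
pose T0 := 2 * (4 * INR N * c * M + M) + 1.
have hNcM : 0 <= INR N * c * M by apply: Rmult_le_pos => //; nra.
have hT0 : 1 <= T0 by rewrite /T0; lra.
pose R1 := T0 + M + c * M + T0.
have hR1 : 0 <= R1 by rewrite /R1; nra.
have h2 := pow_le 2 N.+1 ltac:(lra).
exists (T0 ^ N + 2 ^ N.+1 * R1 ^ N).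
split; first by have := pow_le T0 N ltac:(lra); have := pow_le R1 N hR1; nra.
move=> w T X hT hX hu hv; have hv' := hv c ltac:(lra).
have hTc : T / c * c = T by field; lra.
have hTc0 : 0 <= T / c by apply: Rmult_le_pos; [lra | apply: Rlt_le; apply: Rinv_0_lt_compat; lra].
have [big|small] := Rle_lt_dec T0 T.
- (* Beyond [T0] the point [w] lies in the cone where [Re_Cpow_ge_half] applies. *)
  have cone : 4 * INR N * Rabs (Cim w) <= Cre w.
    have : 4 * INR N * (T / c) <= T / 2 by rewrite /c in hTc *; nra.
    have : INR N * c * X <= INR N * c * M by apply: Rmult_le_compat_l; nra.
    by rewrite /T0 in big; nra.
  have hu0 : T <= 2 * Cre w by rewrite /T0 in big; lra.
  have := Re_Cpow_ge_half w N ltac:(lra) cone.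
  have := pow_incr T (2 * Cre w) N (conj hT hu0); rewrite Rpow_mult_distr /=.
  by have := pow_le 2 N ltac:(lra); have := pow_le T0 N ltac:(lra); have := pow_le R1 N hR1; nra.
- have hw : Cnorm w <= R1.
    apply: Rle_trans (Cnorm_le_reim w) _; rewrite hu.
    have : Rabs (T - X) <= T + X by apply: Rabs_le; lra.
    have : T / c <= T by nra.
    have : c * X <= c * M by apply: Rmult_le_compat_l; lra.
    by rewrite /R1; lra.
  have hre : - R1 ^ N <= Cre (Cpow w N).
    have := Cre_le (Cpow w N); rewrite Cnorm_pow => hle.
    have := pow_incr _ _ N (conj (Cnorm_ge0 w) hw).
    by have := Rle_abs (- Cre (Cpow w N)); rewrite Rabs_Ropp; lra.
  have := pow_incr T T0 N (conj hT (Rlt_le _ _ small)).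
  by nra.
Qed.

Lemma pow_sum_le a b D : 0 <= a -> 0 <= b -> (a + b) ^ D <= 2 ^ D * (a ^ D + b ^ D).
Proof.
move=> ha hb; have := pow_le a D ha; have := pow_le b D hb; have := pow_le 2 D ltac:(lra).
wlog le_ab : a b ha hb / a <= b => [hwlog|].
  by have [/hwlog|/Rlt_le /hwlog] := Rle_lt_dec a b; [|rewrite Rplus_comm (Rplus_comm (a ^ D))]; auto.
have := pow_incr (a + b) (2 * b) D ltac:(lra); rewrite Rpow_mult_distr; nra.
Qed.

Section Damping.
Context {n : nat}.
Implicit Types (z : CVec n).

Definition quad z : CC := \big[Cadd/C0]_(i < n) Copp (Cmul (z i) (z i)).
Definition re2 z : R := \big[Rplus/0]_(i < n) (Cre (z i) * Cre (z i)).
Definition im2 z : R := \big[Rplus/0]_(i < n) (Cim (z i) * Cim (z i)).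

Lemma quad_holomorphic : holomorphic quad.
Proof.
apply: holomorphic_sum => i.
apply: (holomorphic_ext _ (holomorphicM (holomorphic_cst (mkC (-1) 0))
          (holomorphicM (holomorphic_coord i) (holomorphic_coord i)))) => z.
by Ceq.
Qed.

Lemma re2_ge0 z : 0 <= re2 z. Proof. by apply: sumR_ge0 => i; nra. Qed.
Lemma im2_ge0 z : 0 <= im2 z. Proof. by apply: sumR_ge0 => i; nra. Qed.

Lemma Re_quad z : Cre (quad z) = im2 z - re2 z.
Proof.
rewrite /quad Cre_sum /im2 /re2.
rewrite (eq_bigr (fun i => Cim (z i) * Cim (z i) + -1 * (Cre (z i) * Cre (z i)))) => [|i _ /=]; last ring.
by rewrite big_split sumR_scal /=; ring.
Qed.

Lemma Im_quad_le z c : 0 < c -> Rabs (Cim (quad z)) <= c * re2 z + im2 z / c.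
Proof.
move=> hc; rewrite /quad Cim_sum; apply: Rle_trans (sumR_abs _ _) _.
rewrite /re2 /im2 /Rdiv -sumR_scal Rmult_comm -sumR_scal -big_split /=.
apply: sumR_le => i /=.
rewrite Rabs_Ropp (_ : _ + _ = 2 * (Cre (z i) * Cim (z i))); last ring.
rewrite 2!Rabs_mult (Rabs_right 2); last lra.
have := Rsqr_abs (Cre (z i)); have := Rsqr_abs (Cim (z i)); rewrite /Rsqr => -> ->.
set x := Rabs _; set y := Rabs _.
have hic : c * / c = 1 by field; lra.
have := Rinv_0_lt_compat c hc => hc'.
(* AM-GM: [2 x y <= c x^2 + y^2 / c] is [(c x - y)^2 >= 0] divided by [c]. *)
have := Rle_0_sqr (c * x - y); rewrite /Rsqr => sq.
have := Rmult_le_compat_l _ _ _ (Rlt_le _ _ hc') sq; nra.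
Qed.

Lemma vnorm_re2_im2 z : vnorm z = sqrt (re2 z + im2 z).
Proof. by rewrite /vnorm /re2 /im2 -big_split; congr sqrt; apply: eq_bigr => i _; exact: Cnorm_sq. Qed.

Definition damping (K : R) (D : nat) z : CC := Cexp (Cmul (mkC (- K) 0) (Cpow (quad z) D)).

Lemma damping_holomorphic K D : holomorphic (damping K D).
Proof.
apply: holomorphic_comp Cexp_entire _.
exact: holomorphicM (holomorphic_cst _) (holomorphic_pow D quad_holomorphic).
Qed.

Lemma Cnorm_damping K D z : Cnorm (damping K D z) = exp (- K * Cre (Cpow (quad z) D)).
Proof. by rewrite Cnorm_Cexp /=; congr exp; ring. Qed.

Lemma mul_damping_eq0 a K D z : Cmul a (damping K D z) = C0 <-> a = C0.
Proof.
split=> [|->]; last by Ceq.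
move=> /(f_equal Cnorm); rewrite Cnorm_mul Cnorm_damping Cnorm0 => /Rmult_integral.
by case=> [/Cnorm_eq0 //|]; have := exp_pos (- K * Cre (Cpow (quad z) D)); lra.
Qed.

(* The factor [2 ^ D.+1] absorbs the constant of [Re_Cpow_strip], and [2 ^ D]
   the one of [pow_sum_le]. *)
Lemma damped_moderate_vertical_growth (g : CVec n -> CC) B A D :
  0 <= B -> 0 <= A -> (forall z, Cnorm (g z) <= B * exp (A * (1 + vnorm z) ^ D)) ->
  moderate_vertical_growth (fun z => Cmul (g z) (damping (A * 2 ^ D * 2 ^ D.+1) D z)).
Proof.
move=> hB hA Hg M hM.
have [C [hC Hstrip]] := Re_Cpow_strip (M * M) D ltac:(nra).
pose a := 2 + M * M.
exists 0, (B * exp (A * 2 ^ D * (a ^ D + C))) => z hz.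
have hv := vnorm_ge0 z.
rewrite Rpower_O; last lra.
rewrite Rmult_1_r Cnorm_mul Cnorm_damping.
have hT := im2_ge0 z; have hX0 := re2_ge0 z.
have hX : re2 z <= M * M.
  move: hz; rewrite /renorm -/(re2 z) => hz.
  by have := sqrt_sqrt _ hX0; have := sqrt_pos (re2 z); nra.
have hRe := Hstrip (quad z) (im2 z) (re2 z) hT (conj hX0 hX) (Re_quad z) (Im_quad_le z).
have hs : 1 + vnorm z <= a + im2 z.
  suff : vnorm z <= 1 + (re2 z + im2 z) by rewrite /a; lra.
  by rewrite vnorm_re2_im2; apply: sqrt_le_of_sq; nra.
have hpow : (1 + vnorm z) ^ D <= 2 ^ D * (a ^ D + im2 z ^ D).
  apply: (Rle_trans _ ((a + im2 z) ^ D)); first by apply: pow_incr; lra.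
  by apply: pow_sum_le => //; rewrite /a; nra.
apply: Rle_trans (Rmult_le_compat_r _ _ _ (Rlt_le _ _ (exp_pos _)) (Hg z)) _.
rewrite Rmult_assoc -exp_plus; apply: Rmult_le_compat_l => //; apply: exp_le_mono.
have h2 := pow_le 2 D ltac:(lra).
have := Rmult_le_compat_l _ _ _ hA hpow.
have := Rmult_le_compat_l _ _ _ (Rmult_le_pos _ _ hA h2) hRe.
by nra.
Qed.

End Damping.

Theorem mainTheorem5 (n : nat) (lambda : CVec n -> CC) (Hlambda : poly_fun lambda)
  (Psi : CC -> CC) (HPsi : entire Psi) (Hord : finite_order Psi) :
  exists nu : CVec n -> CC,
    holomorphic nu /\ moderate_vertical_growth nu /\
    (forall z : CVec n, nu z = C0 <-> Psi (lambda z) = C0).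
Proof.
have [B [A [D [hB [hA Hgrowth]]]]] := finite_order_poly_growth Hord Hlambda.
exists (fun z => Cmul (Psi (lambda z)) (damping (A * 2 ^ D * 2 ^ D.+1) D z)).
split; [|split].
- apply: holomorphicM (damping_holomorphic _ _).
  exact: holomorphic_comp HPsi (poly_fun_holomorphic Hlambda).
- exact: damped_moderate_vertical_growth hB hA Hgrowth.
- by move=> z; apply: mul_damping_eq0.
Qed.
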